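(* Let $n>2$ and let $p_{(1)}<\dots<p_{(n)}$ be the order statistics of $n$ i.i.d. $\mathrm{Uniform}(0,1)$ random variables. Let $K(x,t):=x\log\frac xt+(1-x)\log\frac{1-x}{1-t}$ for $x\in[0,1)$, $t\in(0,1)$ (with $0\log0=0$). Then for every $s>0$ and every $j\in\{2,\dots,n\}$, $$\mathbb P\big(nK(j/n,p_{(j)})>s\big)\le e\sqrt2\,j\,e^{-(1-1/j)s},$$ and for $j=1$, $$\mathbb P\big(nK(1/n,p_{(1)})>s\big)\le(1+9/e)\,e^{-s}.$$ *)

From HB Require Import structures.
From mathcomp Require Import all_boot all_order all_algebra.
From mathcomp Require Import all_classical all_reals all_analysis.
Set Implicit Arguments. Unset Strict Implicit. Unset Printing Implicit Defensive.
Import Order.TTheory GRing.Theory Num.Theory.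
Local Open Scope classical_set_scope.
Local Open Scope ring_scope.

Definition xlogxy {R : realType} (a b : R) : R :=
  if a == 0 then 0 else a * ln (a / b).

Definition Kdiv {R : realType} (x t : R) : R :=
  xlogxy x t + xlogxy (1 - x) (1 - t).

(* j-th order statistic (1-indexed) of the sample s *)
Definition order_stat {R : realType} (s : seq R) (j : nat) : R :=
  nth 0 (sort <=%R s) j.-1.

(* Lebesgue measure on [0,1]^n of a (boolean) event on samples of length n,
   i.e. the probability of the event for n i.i.d. Uniform(0,1) variables,
   computed as an iterated integral (Tonelli). *)
Fixpoint unif_prob {R : realType} (n : nat) (E : seq R -> bool) : \bar R :=
  match n with
  | 0 => (if E [::] then 1 else 0)%E
  | n'.+1 => (\int[@lebesgue_measure R]_(x in `[0%R, 1%R])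
                 unif_prob n' (fun s => E (x :: s)))%E
  end.

(* Both tails are handled by the exponential Markov inequality for a product
   test function.  If [n K(j/n, p_(j)) > s] and [p_(j) < x = j/n], then [p_(j)]
   lies below the level [a < x] where [n K(x, a) = s], so at least [j] sample
   points fall in [[0, a)].  The test function [prod_i z^[p_i < a]] is then at
   least [z^j] and has expectation [(1 + (z - 1) a)^n]; for the optimal tilt
   [z = x (1 - a) / (a (1 - x))] one gets exactly
   [z^-j (1 + (z - 1) a)^n = e^(-n K(x, a)) = e^-s].  The upper tail is the
   mirror image, so the probability is at most [2 e^-s], which is below both
   stated bounds because [2 <= e sqrt 2 j] and [e <= 9]. *)

From HB Require Import structures.
From mathcomp Require Import all_boot all_order all_algebra.
From mathcomp Require Import all_classical all_reals all_analysis.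
From mathcomp Require Import ring lra.
Set Implicit Arguments. Unset Strict Implicit.
Import measurable_realfun numFieldNormedType.Exports.
Import Order.TTheory GRing.Theory Num.Theory.
Local Open Scope classical_set_scope.
Local Open Scope ring_scope.

Definition in01 {R : realType} (y : R) := 0 <= y <= 1.

Section UnitCube.
Variable R : realType.
Local Notation mu := (@lebesgue_measure R).

Fixpoint unif_integral (n : nat) (f : seq R -> R) : \bar R :=
  match n with
  | 0 => (f [::])%:E
  | n'.+1 => (\int[mu]_(x in `[0%R, 1%R]) unif_integral n' (fun s => f (x :: s)))%E
  end.

(* The nonnegative integral is a supremum over simple functions below the
   integrand, so monotonicity needs no measurability. *)
Lemma ge0_le_integral_nonmeasurable (D : set R) (f1 f2 : R -> \bar R) :
  (forall x, D x -> (0 <= f1 x)%E) -> (forall x, D x -> (f1 x <= f2 x)%E) ->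
  (\int[mu]_(x in D) f1 x <= \int[mu]_(x in D) f2 x)%E.
Proof.
move=> f1_ge0 le_f12.
have f2_ge0 x : D x -> (0 <= f2 x)%E.
  by move=> Dx; exact: le_trans (f1_ge0 x Dx) (le_f12 x Dx).
rewrite !ge0_integralE//; apply: ereal_sup_le => _ [h /= hf1 <-].
exists h => //= x; apply: le_trans (hf1 x) _.
by rewrite /patch; case: ifP => // /set_mem /le_f12.
Qed.

Lemma unif_prob_ge0 n (E : seq R -> bool) : (0 <= unif_prob n E)%E.
Proof.
elim: n E => [|n IH] E /=; first by case: (E [::]).
by apply: integral_ge0 => x _; exact: IH.
Qed.

Lemma unif_prob_le_integral n (E : seq R -> bool) (f : seq R -> R) :
  (forall p, size p = n -> all in01 p -> 0 <= f p /\ (E p -> 1 <= f p)) ->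
  (unif_prob n E <= unif_integral n f)%E.
Proof.
elim: n E f => [|n IH] E f Ef /=.
  have [f_ge0 Ef1] := Ef [::] erefl erefl.
  by case: (E [::]) Ef1 => [Ef1|_]; rewrite lee_fin //; exact: Ef1.
apply: ge0_le_integral_nonmeasurable => x x01; first exact: unif_prob_ge0.
apply: IH => p sp p01; apply: Ef; first by rewrite /= sp.
by move: x01; rewrite /= in_itv /= => x01; rewrite /= p01 andbT.
Qed.

Lemma lebesgue_measure01 : mu `[0%R, 1%R] = 1%E.
Proof. by rewrite lebesgue_measure_itv /= lte01 -EFinB subr0. Qed.

(* Two product terms are integrated together, since [unif_integral] is only
   additive on functions whose sections are measurable. *)
Lemma unif_integral_prod2 n (c1 c2 G1 G2 : R) (g1 g2 : R -> R) :
  (forall y, 0 <= g1 y) -> (forall y, 0 <= g2 y) ->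
  measurable_fun setT g1 -> measurable_fun setT g2 ->
  (\int[mu]_(y in `[0%R, 1%R]) (g1 y)%:E = G1%:E)%E ->
  (\int[mu]_(y in `[0%R, 1%R]) (g2 y)%:E = G2%:E)%E ->
  0 <= c1 -> 0 <= c2 ->
  unif_integral n (fun p => c1 * \prod_(y <- p) g1 y + c2 * \prod_(y <- p) g2 y) =
  (c1 * G1 ^+ n + c2 * G2 ^+ n)%:E.
Proof.
move=> g1_ge0 g2_ge0 mg1 mg2 intg1 intg2.
have G_ge0 (g : R -> R) G : (forall y, 0 <= g y) ->
    (\int[mu]_(y in `[0%R, 1%R]) (g y)%:E = G%:E)%E -> 0 <= G.
  move=> g_ge0 intg; rewrite -lee_fin -intg.
  by apply: integral_ge0 => y _; rewrite lee_fin.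
elim: n c1 c2 => [|n IH] c1 c2 c1_ge0 c2_ge0; first by rewrite /= !big_nil !expr0.
rewrite /=; under eq_integral => x _.
  rewrite (_ : (fun s => _) = fun s => c1 * g1 x * \prod_(y <- s) g1 y +
                                      c2 * g2 x * \prod_(y <- s) g2 y).
    by rewrite IH ?mulr_ge0// (mulrAC c1) (mulrAC c2) EFinD !EFinM; over.
  by apply/funext => s; rewrite !big_cons !mulrA.
have cG_ge0 c (g : R -> R) G : 0 <= c -> (forall y, 0 <= g y) ->
    (\int[mu]_(y in `[0%R, 1%R]) (g y)%:E = G%:E)%E -> 0 <= c * G ^+ n.
  by move=> c_ge0 g_ge0 /(G_ge0 _ _ g_ge0) G0; rewrite mulr_ge0 ?exprn_ge0.
have c1G1 := cG_ge0 _ _ _ c1_ge0 g1_ge0 intg1.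
have c2G2 := cG_ge0 _ _ _ c2_ge0 g2_ge0 intg2.
rewrite ge0_integralD//; last 4 first.
- by move=> x _; rewrite -EFinM lee_fin mulr_ge0.
- by apply: emeasurable_funM => //; apply/measurable_EFinP; exact: measurable_funTS.
- by move=> x _; rewrite -EFinM lee_fin mulr_ge0.
- by apply: emeasurable_funM => //; apply/measurable_EFinP; exact: measurable_funTS.
rewrite !ge0_integralZl_EFin//; try by [move=> x _; rewrite lee_fin |
  apply/measurable_EFinP; exact: measurable_funTS].
by rewrite intg1 intg2 -!EFinM -EFinD !exprSr !mulrA.
Qed.

Lemma lebesgue_measure_co0 (a : R) : 0 <= a <= 1 ->
  mu (`[0%R, a[ `&` `[0%R, 1%R]) = a%:E.
Proof.
move=> /andP[a_ge0 a_le1]; rewrite setIidl; last first.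
  by move=> y; rewrite /= !in_itv /= => /andP[-> /ltW/le_trans->].
rewrite lebesgue_measure_itv /= lte_fin.
case: ltP => [_|a_le0]; first by congr EFin; ring.
by have -> : a = 0 by lra.
Qed.

Lemma lebesgue_measure_oc1 (a : R) : 0 <= a <= 1 ->
  mu (`]1 - a, 1%R] `&` `[0%R, 1%R]) = a%:E.
Proof.
move=> /andP[a_ge0 a_le1]; rewrite setIidl; last first.
  move=> y; rewrite /= !in_itv /= => /andP[ay ->]; rewrite andbT.
  by rewrite (le_trans _ (ltW ay)) // subr_ge0.
rewrite lebesgue_measure_itv /= lte_fin.
case: ltP => [_|a_le0]; first by congr EFin; ring.
by have -> : a = 0 by lra.
Qed.

Lemma integral_tilt (v : R) (A : set R) : measurable A -> 0 <= v ->
  (\int[mu]_(y in `[0%R, 1%R]) (1 + v * \1_A y)%:E =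
   1 + v%:E * mu (A `&` `[0%R, 1%R]))%E.
Proof.
move=> mA v_ge0.
have m01 : measurable (`[0%R, 1%R] : set R) by exact: measurable_itv.
under eq_integral do rewrite EFinD EFinM.
rewrite ge0_integralD//; last 2 first.
- by move=> x _; rewrite -EFinM lee_fin mulr_ge0.
- by apply/emeasurable_funM => //; apply/measurable_EFinP; exact: measurable_indic.
rewrite ge0_integralZl_EFin//; try by [move=> x _; rewrite lee_fin |
  apply/measurable_EFinP; exact: measurable_indic].
rewrite integral_indic//; congr (_ + _)%E.
by rewrite -[RHS]mule1 -lebesgue_measure01 -(integral_cst mu m01).
Qed.

End UnitCube.

Lemma sub_in_count (T : eqType) (a1 a2 : pred T) (s : seq T) :
  {in s, subpred a1 a2} -> (count a1 s <= count a2 s)%N.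
Proof.
move=> sub12; have -> : count a1 s = count (predI a1 a2) s.
  apply: eq_in_count => y ys /=.
  by case: (boolP (a1 y)) => // /(sub12 y ys) ->.
by apply: sub_count => y /andP[].
Qed.

Section OrderStatistics.
Variable R : realType.
Implicit Types (p : seq R) (j : nat).

Lemma order_stat_mem p j : (0 < j <= size p)%N -> order_stat p j \in p.
Proof.
by case: j => // j /= jp; rewrite /order_stat -(mem_sort <=%R) mem_nth ?size_sort.
Qed.

Lemma count_le_order_stat p j : (0 < j <= size p)%N ->
  (j <= count (fun y => y <= order_stat p j)%R p)%N.
Proof.
case: j => // j /= jp; set q := sort <=%R p.
have q_sorted : sorted <=%R q by apply: sort_sorted; exact: le_total.
have jq : (j < size q)%N by rewrite size_sort.
rewrite -(count_sort <=%R) -/q -(cat_take_drop j.+1 q) count_cat.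
have /eqP -> : count (fun y => y <= nth 0 q j) (take j.+1 q) == size (take j.+1 q).
  rewrite -all_count; apply/allP => y /(nthP 0)[i]; rewrite size_takel // => ij <-.
  rewrite nth_take //; apply: (sorted_leq_nth le_trans lexx) => //.
  by rewrite inE (leq_trans ij).
by rewrite size_takel // leq_addr.
Qed.

Lemma count_ge_order_stat p j : (0 < j <= size p)%N ->
  (size p - j < count (fun y => order_stat p j <= y)%R p)%N.
Proof.
case: j => // j /= jp; set q := sort <=%R p.
have q_sorted : sorted <=%R q by apply: sort_sorted; exact: le_total.
have jq : (j < size q)%N by rewrite size_sort.
rewrite -(count_sort <=%R) -/q -(cat_take_drop j q) count_cat.
have /eqP -> : count (fun y => nth 0 q j <= y) (drop j q) == size (drop j q).
  rewrite -all_count; apply/allP => y /(nthP 0)[i]; rewrite size_drop => ij <-.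
  rewrite nth_drop; apply: (sorted_leq_nth le_trans lexx) => //.
    by rewrite inE -ltn_subRL.
  exact: leq_addr.
by rewrite size_drop size_sort subnSK // leq_addl.
Qed.

End OrderStatistics.

Section RelativeEntropy.
Variable R : realType.
Implicit Types x t : R.

Definition kl x t := x * (ln x - ln t) + (1 - x) * (ln (1 - x) - ln (1 - t)).

Lemma xlogxyE x t : 0 <= x -> 0 < t -> xlogxy x t = x * (ln x - ln t).
Proof.
move=> x_ge0 t_gt0; rewrite /xlogxy; have [->|x_neq0] := eqVneq x 0.
  by rewrite mul0r.
have x_gt0 : 0 < x by rewrite lt0r x_neq0.
by rewrite lnM ?posrE ?invr_gt0 // lnV ?posrE.
Qed.

Lemma Kdiv_kl x t : 0 <= x <= 1 -> 0 < t < 1 -> Kdiv x t = kl x t.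
Proof.
by move=> /andP[? ?] /andP[? ?]; rewrite /Kdiv !xlogxyE ?subr_ge0 ?subr_gt0.
Qed.

(* At [t = 0] and [t = 1] the junk values [x / 0 = 0] and [ln 0 = 0] leave only
   a term [a * ln a <= 0]. *)
Lemma Kdiv_gt0_interior x t : 0 <= x <= 1 -> 0 <= t <= 1 -> 0 < Kdiv x t ->
  0 < t < 1.
Proof.
move=> /andP[x_ge0 x_le1] /andP[t_ge0 t_le1]; apply: contraTT.
have xlogx_le0 a : 0 <= a <= 1 -> xlogxy a 1 <= 0.
  move=> /andP[a_ge0 a_le1]; rewrite /xlogxy divr1; case: ifP => // _.
  by rewrite mulr_ge0_le0 // ln_le0.
have xlog0 a : xlogxy a 0 = 0 by rewrite /xlogxy invr0 mulr0 ln0 // mulr0 if_same.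
rewrite negb_and -!leNgt => /orP[t_le0|t_ge1].
  have -> : t = 0 by apply/eqP; rewrite eq_le t_le0.
  by rewrite /Kdiv xlog0 add0r subr0 xlogx_le0 // subr_ge0 x_le1 gerBl.
have -> : t = 1 by apply/eqP; rewrite eq_le t_le1.
by rewrite /Kdiv subrr xlog0 addr0 xlogx_le0 // x_ge0.
Qed.

Lemma Kdiv_xx x : Kdiv x x = 0.
Proof.
have xlogxx a : xlogxy a a = 0.
  by rewrite /xlogxy; case: eqP => // /eqP a_neq0; rewrite divff // ln1 mulr0.
by rewrite /Kdiv !xlogxx addr0.
Qed.

Lemma klxx x : kl x x = 0.
Proof. by rewrite /kl !subrr !mulr0 addr0. Qed.

Lemma kl_sym x t : kl (1 - x) (1 - t) = kl x t.
Proof. by rewrite /kl !(opprB, addrCA 1, subrr, addr0); ring. Qed.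

(* [ln u - ln v <= u / v - 1], applied to both logarithms. *)
Lemma kl_increment_ge x t1 t2 : 0 <= x <= 1 -> 0 < t1 < 1 -> 0 < t2 < 1 ->
  (t2 - t1) * (x - t2) / (t2 * (1 - t2)) <= kl x t1 - kl x t2.
Proof.
move=> /andP[x_ge0 x_le1] /andP[t1_gt0 t1_lt1] /andP[t2_gt0 t2_lt1].
have ln_sub (u v : R) : 0 < u -> 0 < v -> ln u - ln v <= u / v - 1.
  move=> u_gt0 v_gt0; rewrite -lnV ?posrE // -lnM ?posrE ?invr_gt0 //.
  have := @le_ln1Dx R (u / v - 1); rewrite addrCA subrr addr0; apply.
  by rewrite ltrBrDl subrr divr_gt0.
have u1 : 0 < 1 - t1 by rewrite subr_gt0.
have u2 : 0 < 1 - t2 by rewrite subr_gt0.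
have h1 := ler_wpM2l x_ge0 (ln_sub _ _ t1_gt0 t2_gt0).
have x'_ge0 : 0 <= 1 - x by rewrite subr_ge0.
have h2 := ler_wpM2l x'_ge0 (ln_sub _ _ u1 u2).
have -> : (t2 - t1) * (x - t2) / (t2 * (1 - t2)) =
    - (x * (t1 / t2 - 1) + (1 - x) * ((1 - t1) / (1 - t2) - 1)).
  by field; rewrite !gt_eqF.
rewrite /kl; lra.
Qed.

Lemma kl_nonincreasing x t1 t2 : 0 <= x <= 1 -> 0 < t1 -> t1 <= t2 -> t2 <= x ->
  t2 < 1 -> kl x t2 <= kl x t1.
Proof.
move=> x01 t1_gt0 t12 t2x t2_lt1; rewrite -subr_ge0.
have t2_gt0 := lt_le_trans t1_gt0 t12.
apply: le_trans (kl_increment_ge x01 _ _); last 2 first.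
- by rewrite t1_gt0 (le_lt_trans t12).
- by rewrite t2_gt0.
by rewrite divr_ge0 ?mulr_ge0 ?subr_ge0 ?(ltW t2_lt1) ?(ltW t2_gt0).
Qed.

Lemma kl_continuous x t : 0 < t < 1 -> {for t, continuous (kl x)}.
Proof.
move=> /andP[t_gt0 t_lt1].
apply: cvgD; apply: cvgM; do ?[exact: cvg_cst]; apply: cvgB; do ?[exact: cvg_cst].
  exact: continuous_ln.
have : {for t, continuous ((@ln R) \o (fun u => 1 - u))}.
  apply: continuous_comp; first by apply: cvgB; [exact: cvg_cst | exact: cvg_id].
  by apply: continuous_ln; rewrite subr_gt0.
exact.
Qed.

Lemma kl_level x c : 0 < x < 1 -> 0 <= c ->
  (forall t, 0 < t <= x -> kl x t <= c) \/
  exists a, [/\ 0 < a <= x, kl x a = c & forall t, 0 < t <= x -> c < kl x t -> t < a].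
Proof.
move=> /andP[x_gt0 x_lt1] c_ge0.
have [[e /andP[e_gt0 ex] ce]|no_e] :=
  pselect (exists2 e, 0 < e <= x & c <= kl x e); last first.
  left => t t0x; rewrite leNgt; apply/negP => ct.
  by apply: no_e; exists t => //; exact: ltW.
right.
have [a] : exists2 a, a \in `[e, x] & kl x a = c.
  apply: IVT => //.
    apply: continuous_in_subspaceT => y; rewrite inE /= in_itv /= => /andP[ey yx].
    by apply: kl_continuous; rewrite (lt_le_trans e_gt0) ?(le_lt_trans yx).
  by rewrite klxx ge_min le_max ce c_ge0 orbT.
rewrite in_itv /= => /andP[ea ax] kla.
have x01 : 0 <= x <= 1 by rewrite !ltW.
exists a; split; rewrite ?(lt_le_trans e_gt0 ea) // => t /andP[t_gt0 tx] ct.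
rewrite ltNge; apply/negP => at_.
have := kl_nonincreasing x01 (lt_le_trans e_gt0 ea) at_ tx (le_lt_trans tx x_lt1).
by rewrite kla leNgt ct.
Qed.

End RelativeEntropy.

Section ProductCertificates.
Variable R : realType.
Local Notation mu := (@lebesgue_measure R).

(* [c * G ^+ n] is the expectation of the test function [c * prod g] on the
   unit cube, so this is an exponential Markov bound [P(E) <= e^-s]. *)
Definition product_certificate n (s : R) (E : seq R -> bool) : Prop :=
  exists (c G : R) (g : R -> R),
  [/\ 0 <= c /\ (forall y, 0 <= g y), measurable_fun setT g,
      (\int[mu]_(y in `[0%R, 1%R]) (g y)%:E = G%:E)%E, c * G ^+ n <= expR (- s) &
      forall p, size p = n -> all in01 p -> E p -> 1 <= c * \prod_(y <- p) g y].

Lemma unif_prob_le_certificates n s (E E1 E2 : seq R -> bool) :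
  product_certificate n s E1 -> product_certificate n s E2 ->
  (forall p, size p = n -> all in01 p -> E p -> E1 p || E2 p) ->
  (unif_prob n E <= (2 * expR (- s))%:E)%E.
Proof.
move=> [c1 [G1 [g1 [[c1_ge0 g1_ge0] mg1 intg1 cG1 E1g]]]].
move=> [c2 [G2 [g2 [[c2_ge0 g2_ge0] mg2 intg2 cG2 E2g]]]] E12.
apply: le_trans (@unif_prob_le_integral _ n E
  (fun p => c1 * \prod_(y <- p) g1 y + c2 * \prod_(y <- p) g2 y) _) _.
  move=> p sp p01.
  have pg1 : 0 <= c1 * \prod_(y <- p) g1 y by rewrite mulr_ge0 ?prodr_ge0.
  have pg2 : 0 <= c2 * \prod_(y <- p) g2 y by rewrite mulr_ge0 ?prodr_ge0.
  split; first by rewrite addr_ge0.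
  move=> /(E12 p sp p01)/orP[/(E1g p sp p01)|/(E2g p sp p01)] Eg.
    by rewrite (le_trans Eg) ?lerDl.
  by rewrite (le_trans Eg) ?lerDr.
rewrite (unif_integral_prod2 n _ _ mg1 mg2 intg1 intg2) //.
by rewrite lee_fin mulr2n mulrDl mul1r lerD.
Qed.

Lemma certificate0 n s (E : seq R -> bool) :
  (forall p, size p = n -> all in01 p -> ~~ E p) -> product_certificate n s E.
Proof.
move=> notE; exists 0, 1, (fun _ => 1); split.
- by split.
- exact: measurable_cst.
- rewrite (integral_cst mu (measurable_itv _)).
  by rewrite mul1e; exact: lebesgue_measure01.
- by rewrite mul0r expR_ge0.
- by move=> p sp p01 Ep; move: (notE p sp p01); rewrite Ep.
Qed.

Lemma certificate_all n s (E : seq R -> bool) (A : set R) (q : R) :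
  measurable A -> mu (A `&` `[0%R, 1%R]) = q%:E -> q ^+ n <= expR (- s) ->
  (forall p, size p = n -> all in01 p -> E p -> {subset p <= A}) ->
  product_certificate n s E.
Proof.
move=> mA muA qs EA; exists 1, q, \1_A; split.
- by split => // y; rewrite indicE ler0n.
- exact: measurable_indic.
- by rewrite integral_indic ?muA //; exact: measurable_itv.
- by rewrite mul1r.
- move=> p sp p01 /(EA p sp p01) pA; rewrite mul1r big_seq big1 // => y /pA yA.
  by rewrite indicE yA.
Qed.

Lemma prod_tilt (z : R) (A : set R) (p : seq R) :
  \prod_(y <- p) (1 + (z - 1) * \1_A y) = z ^+ count (fun y => y \in A) p.
Proof.
elim: p => [|y p IH]; first by rewrite big_nil.
rewrite big_cons IH /= exprD indicE; case: (y \in A) => /=.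
  by rewrite mulr1 addrC subrK expr1.
by rewrite mulr0 addr0 expr0.
Qed.

Lemma expR_Nmul_kl n k (x q : R) : 0 < x < 1 -> 0 < q < 1 -> n%:R * x = k%:R ->
  expR (- (n%:R * kl x q)) = (q / x) ^+ k * ((1 - q) / (1 - x)) ^+ (n - k).
Proof.
move=> /andP[x_gt0 x_lt1] /andP[q_gt0 q_lt1] nx.
have kn : (k <= n)%N.
  by rewrite -(ler_nat R) -nx -[leRHS]mulr1 ler_wpM2l ?ler0n ?ltW.
have nx' : n%:R * (1 - x) = (n - k)%:R by rewrite natrB // -nx mulrBr mulr1.
have -> : - (n%:R * kl x q) =
    k%:R * (ln q - ln x) + (n - k)%:R * (ln (1 - q) - ln (1 - x)).
  by rewrite -nx -nx' /kl; ring.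
by rewrite expRD !expRM_natl !expRB !lnK ?posrE ?subr_gt0.
Qed.

Lemma certificate_count n k s (x q : R) (A : set R) (E : seq R -> bool) :
  measurable A -> mu (A `&` `[0%R, 1%R]) = q%:E -> 0 < q <= x -> x < 1 ->
  n%:R * x = k%:R -> s = n%:R * kl x q ->
  (forall p, size p = n -> all in01 p -> E p -> (k <= count (fun y => y \in A) p)%N) ->
  product_certificate n s E.
Proof.
move=> mA muA /andP[q_gt0 qx] x_lt1 nx -> EA.
have x_gt0 := lt_le_trans q_gt0 qx.
have q_lt1 := le_lt_trans qx x_lt1.
have kn : (k <= n)%N by rewrite -(ler_nat R) -nx -[leRHS]mulr1 ler_wpM2l ?ler0n ?ltW.
(* the tilt minimising [z ^- k * (1 + (z - 1) * q) ^+ n] *)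
pose z := x * (1 - q) / (q * (1 - x)).
have z_ge1 : 1 <= z by rewrite ler_pdivlMr ?mul1r ?mulr_gt0 ?subr_gt0 //; nra.
have z_gt0 : 0 < z := lt_le_trans ltr01 z_ge1.
exists (z^-1 ^+ k), (1 + (z - 1) * q), (fun y => 1 + (z - 1) * \1_A y); split.
- split; first by rewrite exprn_ge0 // invr_ge0 ltW.
  by move=> y; rewrite addr_ge0 // mulr_ge0 ?subr_ge0 // indicE ler0n.
- apply: measurable_funD => //; apply: measurable_funM => //; exact: measurable_indic.
- by rewrite integral_tilt ?subr_ge0 // muA -EFinM -EFinD.
- set w := (1 - q) / (1 - x).
  have w_neq0 : w != 0 by rewrite mulf_neq0 ?invr_eq0 ?gt_eqF ?subr_gt0.
  have -> : 1 + (z - 1) * q = w by rewrite /z /w; field; rewrite !gt_eqF ?subr_gt0.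
  have -> : z^-1 = q / x / w.
    by rewrite /z /w; field; rewrite !gt_eqF ?subr_gt0.
  rewrite (expR_Nmul_kl _ _ nx) ?x_gt0 ?q_gt0 // -[in w ^+ n](subnKC kn) exprD.
  by rewrite expr_div_n mulrA divfK ?expf_neq0.
- move=> p sp p01 /(EA p sp p01) kA; rewrite prod_tilt exprVn mulrC.
  by rewrite ler_pdivlMr ?exprn_gt0 // mul1r ler_weXn2l.
Qed.

End ProductCertificates.

Section OrderStatisticTails.
Variable R : realType.
Variables (n j : nat) (s : R).
Hypotheses (j_gt0 : (0 < j)%N) (jn : (j <= n)%N) (s_gt0 : 0 < s).

Let x : R := j%:R / n%:R.
Let n_gt0 : 0 < n%:R :> R. Proof. by rewrite ltr0n (leq_trans j_gt0). Qed.
Let nx : n%:R * x = j%:R. Proof. by rewrite mulrC divfK ?gt_eqF. Qed.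
Let x_gt0 : 0 < x. Proof. by rewrite divr_gt0 // ltr0n. Qed.
Let x_le1 : x <= 1. Proof. by rewrite ler_pdivrMr // mul1r ler_nat. Qed.

Lemma order_stat_Kdiv_gt p : size p = n -> all in01 p ->
  s < n%:R * Kdiv x (order_stat p j) ->
  0 < order_stat p j < 1 /\ s / n%:R < kl x (order_stat p j).
Proof.
move=> sp p01 s_lt; set t := order_stat p j.
have t01 : 0 <= t <= 1.
  by move/allP: p01; apply; apply: order_stat_mem; rewrite sp j_gt0.
have x01 : 0 <= x <= 1 by rewrite ltW.
have Kt_gt0 : 0 < Kdiv x t by rewrite -(pmulr_rgt0 _ n_gt0) (lt_trans s_gt0).
have t01' := Kdiv_gt0_interior x01 t01 Kt_gt0.
by split => //; rewrite ltr_pdivrMr // mulrC -Kdiv_kl.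
Qed.

Lemma lower_tail_certificate : (j < n)%N ->
  product_certificate n s (fun p => (s < n%:R * Kdiv x (order_stat p j)) &&
                                    (order_stat p j < x)).
Proof.
move=> j_lt_n; have x_lt1 : x < 1 by rewrite ltr_pdivrMr // mul1r ltr_nat.
have x01 : 0 < x < 1 by rewrite x_gt0.
have [kl_small|[a [/andP[a_gt0 ax] kla a_max]]] :=
  kl_level x01 (divr_ge0 (ltW s_gt0) (ltW n_gt0)).
  apply: certificate0 => p sp p01; apply/negP => /andP[/order_stat_Kdiv_gt].
  move=> /(_ sp p01)[/andP[t_gt0 _] s_lt] tx.
  have t0x : 0 < order_stat p j <= x by rewrite t_gt0 (ltW tx).
  by have := kl_small _ t0x; rewrite leNgt s_lt.
apply: (@certificate_count _ n j s x a `[0%R, a[) => //.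
- by apply: lebesgue_measure_co0; rewrite ltW // (le_trans ax).
- by rewrite a_gt0.
- by rewrite kla mulrC divfK ?gt_eqF.
move=> p sp p01 /andP[/(order_stat_Kdiv_gt sp p01)[/andP[t_gt0 _] s_lt] tx].
have ta : order_stat p j < a by apply: a_max; rewrite // t_gt0 (ltW tx).
have jp : (0 < j <= size p)%N by rewrite sp j_gt0.
apply: leq_trans (count_le_order_stat jp) (sub_in_count _).
move=> y /(allP p01)/andP[y_ge0 _] yt; apply/mem_set; rewrite /= in_itv /= y_ge0.
exact: le_lt_trans yt ta.
Qed.

(* The mirror image of the lower tail: [1 - p] has order statistic [1 - t]
   and [kl (1 - x) (1 - t) = kl x t]. *)
Lemma upper_tail_certificate : (j < n)%N ->
  product_certificate n s (fun p => (s < n%:R * Kdiv x (order_stat p j)) &&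
                                    (x < order_stat p j)).
Proof.
move=> j_lt_n; have x_lt1 : x < 1 by rewrite ltr_pdivrMr // mul1r ltr_nat.
have x'01 : 0 < 1 - x < 1 by rewrite subr_gt0 x_lt1 ltrBlDr ltrDl.
have [kl_small|[a [/andP[a_gt0 ax] kla a_max]]] :=
  kl_level x'01 (divr_ge0 (ltW s_gt0) (ltW n_gt0)).
  apply: certificate0 => p sp p01; apply/negP => /andP[/order_stat_Kdiv_gt].
  move=> /(_ sp p01)[/andP[_ t_lt1] s_lt] xt.
  have t'x : 0 < 1 - order_stat p j <= 1 - x by rewrite subr_gt0 t_lt1 lerB // ltW.
  by have := kl_small _ t'x; rewrite kl_sym leNgt s_lt.
apply: (@certificate_count _ n (n - j) s (1 - x) a `]1 - a, 1%R]) => //.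
- by apply: lebesgue_measure_oc1; rewrite ltW // (le_trans ax) // ltW; case/andP: x'01.
- by rewrite a_gt0.
- by case/andP: x'01.
- by rewrite mulrBr mulr1 nx natrB.
- by rewrite kla mulrC divfK ?gt_eqF.
move=> p sp p01 /andP[/(order_stat_Kdiv_gt sp p01)[/andP[_ t_lt1] s_lt] xt].
have ta : 1 - a < order_stat p j.
  rewrite ltrBlDr -ltrBlDl; apply: a_max; last by rewrite kl_sym.
  by rewrite subr_gt0 t_lt1 lerB // ltW.
have jp : (0 < j <= size p)%N by rewrite sp j_gt0.
rewrite -sp; apply: leq_trans (ltnW (count_ge_order_stat jp)) (sub_in_count _).
move=> y /(allP p01)/andP[_ y_le1] ty; apply/mem_set; rewrite /= in_itv /= y_le1 andbT.
exact: lt_le_trans ta ty.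
Qed.

Lemma top_lower_tail_certificate : j = n ->
  product_certificate n s (fun p => (s < n%:R * Kdiv x (order_stat p j)) &&
                                    (order_stat p j < x)).
Proof.
move=> jE; set a := expR (- (s / n%:R)).
have a_lt1 : a < 1 by rewrite expR_lt1 oppr_lt0 divr_gt0.
apply: (@certificate_all _ n s _ `[0%R, a[ a).
- exact: measurable_itv.
- by apply: lebesgue_measure_co0; rewrite expR_ge0 ltW.
- by rewrite -expRM_natl mulrN mulrC divfK ?gt_eqF.
move=> p sp p01 /andP[/(order_stat_Kdiv_gt sp p01)[/andP[t_gt0 _] s_lt] _].
have ta : order_stat p j < a.
  have x1 : x = 1 by rewrite /x jE divff ?gt_eqF.
  move: s_lt; rewrite x1 /kl subrr mul0r addr0 ln1 mul1r sub0r ltrNr => t_lt.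
  by rewrite -[order_stat p j]lnK ?posrE // ltr_expR.
have jp : (0 < j <= size p)%N by rewrite sp j_gt0.
have /allP pt : all (fun y => y <= order_stat p j) p.
  by rewrite all_count eqn_leq count_size sp -{1}jE count_le_order_stat.
move=> y yp; have /andP[y_ge0 _] := allP p01 y yp.
by apply/mem_set; rewrite /= in_itv /= y_ge0 (le_lt_trans (pt y yp)).
Qed.

Lemma order_stat_tail_le :
  (unif_prob n (fun p => (s < n%:R * Kdiv x (order_stat p j))%R) <=
   (2 * expR (- s))%:E)%E.
Proof.
have [lower upper] :
    product_certificate n s (fun p => (s < n%:R * Kdiv x (order_stat p j)) &&
                                      (order_stat p j < x)) /\
    product_certificate n s (fun p => (s < n%:R * Kdiv x (order_stat p j)) &&
                                      (x < order_stat p j)).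
  have [j_lt_n|j_ge_n] := ltnP j n.
    by split; [exact: lower_tail_certificate | exact: upper_tail_certificate].
  have jE : j = n by apply/eqP; rewrite eqn_leq jn.
  split; first exact: top_lower_tail_certificate.
  apply: certificate0 => p sp p01; apply/negP => /andP[/(order_stat_Kdiv_gt sp p01)].
  move=> [/andP[_ t_lt1] _] /lt_trans/(_ t_lt1).
  by rewrite ltr_pdivrMr // mul1r ltr_nat ltnNge j_ge_n.
apply: unif_prob_le_certificates lower upper _ => p sp p01 s_lt; rewrite s_lt /=.
have [//|//|tx] := ltgtP (order_stat p j) x.
by move: s_lt; rewrite tx Kdiv_xx mulr0 ltNge ltW.
Qed.

End OrderStatisticTails.

Lemma expR1_ge2 {R : realType} : 2 <= expR (1 : R).
Proof. exact: expR_ge1Dx. Qed.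

Lemma expR1_le4 {R : realType} : expR (1 : R) <= 4.
Proof.
set u := expR (2^-1 : R); have u_gt0 : 0 < u by rewrite expR_gt0.
have : 1 - 2^-1 <= u^-1 by rewrite -expRN expR_ge1Dx.
rewrite -(ler_pM2l u_gt0) mulfV ?gt_eqF // => u_le2.
have -> : expR (1 : R) = u ^+ 2 by rewrite -expRM_natl mulfV ?pnatr_eq0.
rewrite expr2; nra.
Qed.

Theorem lemma5 (R : realType) (n : nat) (hn : (2 < n)%N) (s : R) (hs : 0 < s) :
  (forall j : nat, (2 <= j <= n)%N ->
     (unif_prob n (fun p : seq R =>
        (s < n%:R * Kdiv (j%:R / n%:R) (order_stat p j))%R)
      <= (expR 1 * Num.sqrt 2 * j%:R * expR (- ((1 - j%:R^-1) * s)))%:E)%E)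
  /\
  (unif_prob n (fun p : seq R =>
        (s < n%:R * Kdiv (1 / n%:R) (order_stat p 1))%R)
      <= ((1 + 9 / expR 1) * expR (- s))%:E)%E.
Proof.
have e_ge2 := @expR1_ge2 R; have e_le4 := @expR1_le4 R.
split=> [j /andP[j_ge2 jn]|].
  apply: le_trans (order_stat_tail_le (leq_trans _ j_ge2) jn hs) _ => //.
  have sqrt2_ge1 : 1 <= Num.sqrt (2 : R).
    by rewrite -[X in X <= _]sqrtr1; apply: ler_wsqrtr; rewrite ler1n.
  have e_sqrt2 : 2 <= expR 1 * Num.sqrt (2 : R) by rewrite -[leLHS]mulr1; apply: ler_pM.
  rewrite lee_fin ler_pM ?expR_ge0 //.
    rewrite (le_trans e_sqrt2) // ler_peMr ?ler1n ?(le_trans _ e_sqrt2) //.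
    by rewrite -ltnS ltnW.
  by rewrite ler_expR lerN2 ler_piMl ?(ltW hs) // gerBl invr_ge0 ler0n.
apply: le_trans (order_stat_tail_le (isT : (0 < 1)%N) (ltnW (ltnW hn)) hs) _.
rewrite lee_fin ler_wpM2r ?expR_ge0 // -lerBlDl.
by rewrite ler_pdivlMr ?expR_gt0 //; lra.
Qed.
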